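(* Let $(V,V_0,V_1,E)$ be a finite turn-based game graph in which every node has at least one successor, and let $G\subseteq V$ be such that from every node of $V$ there is a path in $E$ to some node of $G$. Then for every $j_0\in\{0,1\}$ the call $\textsc{GameStack}(j_0,G,V)$ terminates: every execution of the while loop terminates, and only finitely many recursive calls of $\textsc{GameStack}$ are made.
   Context: Turn-based game graph: $V$ is the node set, partitioned into $V_0$ (nodes where player 0 moves) and $V_1$ (nodes where player 1 moves), $E\subseteq V\times V$ the edges. For $j\in\{0,1\}$ and $X\subseteq V$: $\mathrm{CPre}_j(X)=\{v\in V_j:\exists(v,u)\in E,\ u\in X\}\cup\{v\in V_{1-j}:\forall(v,u)\in E,\ u\in X\}$. Attractor: $\mathrm{Attr}_j(S)=\mu X.\,S\cup\mathrm{CPre}_j(X)$ (least fixpoint). Controlled-escape set: $\mathrm{Trap}_j(S,E')=\nu X.\,E'\cup(\mathrm{CPre}_j(X)\cap S)$ (greatest fixpoint). Procedure $\textsc{UnconditionalAssumption}(j,g)$: $A:=\mathrm{Attr}_j(g)$; $B:=\mathrm{Attr}_{1-j}(A)$; $r:=(B\setminus A)\cap\mathrm{Trap}_j(B,A)$; return $(A,r)$. Procedure $\textsc{GameStack}(j,G,U)$: set $\mathit{goal}:=G$ and $\mathit{trap}:=V$; while $\mathit{trap}\ne\emptyset$: $(\mathit{attr},\mathit{trap}):=\textsc{UnconditionalAssumption}(j,\mathit{goal})$, $\mathit{goal}:=\mathit{attr}\cup\mathit{trap}$, and record the assumption $\Box\Diamond(\mathit{trap}\rightarrow\mathit{attr})$.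 After the loop, record the game $(j,\mathit{goal}\setminus G,G,\text{assumptions})$ on a stack, set $U:=U\setminus\mathit{goal}$; if $U=\emptyset$ return; otherwise call $\textsc{GameStack}(1-j,\mathit{goal},U)$ and then return. (The recorded data does not affect control flow.) *)

From mathcomp Require Import all_boot.
Set Implicit Arguments. Unset Strict Implicit. Unset Printing Implicit Defensive.

Section Game.
Variables (V : finType) (V0 : {set V}) (E : rel V).

(* Players are encoded as booleans: false = player 0, true = player 1.
   V_1 is the complement of V_0. *)
Definition Vpl (j : bool) : {set V} := if j then ~: V0 else V0.

Definition CPre (j : bool) (X : {set V}) : {set V} :=
  [set v in Vpl j | [exists u, E v u && (u \in X)]]
  :|: [set v in Vpl (~~ j) | [forall u, E v u ==> (u \in X)]].

Definition lfp (F : {set V} -> {set V}) : {set V} :=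
  \bigcap_(X : {set V} | F X \subset X) X.
Definition gfp (F : {set V} -> {set V}) : {set V} :=
  \bigcup_(X : {set V} | X \subset F X) X.

Definition Attr (j : bool) (S : {set V}) : {set V} :=
  lfp (fun X => S :|: CPre j X).

Definition Trap (j : bool) (S E' : {set V}) : {set V} :=
  gfp (fun X => E' :|: (CPre j X :&: S)).

Definition UnconditionalAssumption (j : bool) (g : {set V})
  : {set V} * {set V} :=
  let A := Attr j g in
  let B := Attr (~~ j) A in
  (A, (B :\: A) :&: Trap j B A).

(* [loop_run j goal trap goal'] : the while loop started in state
   (goal, trap) terminates, with final value goal' of the variable goal. *)
Inductive loop_run (j : bool) : {set V} -> {set V} -> {set V} -> Prop :=
| loop_stop goal : loop_run j goal set0 goal
| loop_step goal trap goal' :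
    trap != set0 ->
    loop_run j ((UnconditionalAssumption j goal).1 :|:
                (UnconditionalAssumption j goal).2)
               (UnconditionalAssumption j goal).2 goal' ->
    loop_run j goal trap goal'.

(* [GameStack_terminates j G U] : the call GameStack(j, G, U) terminates
   (finite derivation = every while loop terminates and finitely many
   recursive calls are made).  The recorded stack data does not affect
   control flow and is omitted. *)
Inductive GameStack_terminates : bool -> {set V} -> {set V} -> Prop :=
| gs_return j G U goal :
    loop_run j G setT goal ->
    U :\: goal = set0 ->
    GameStack_terminates j G U
| gs_recurse j G U goal :
    loop_run j G setT goal ->
    U :\: goal != set0 ->
    GameStack_terminates (~~ j) goal (U :\: goal) ->
    GameStack_terminates j G U.

End Game.

(* Each pass of the while loop replaces goal by attr :|: trap, where attr contains goal and
   trap is disjoint from attr, so goal grows strictly as long as trap is nonempty: the loop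
   terminates, and its final goal contains the attractor of the initial one.  Across calls,
   U is the complement of goal, so it suffices that goal also grows strictly over any two
   consecutive calls.  Since G is reachable from everywhere, some edge leaves ~: G into G;
   its source lies in CPre j G or in CPre (~~ j) G according to who moves there, hence in
   one of the two attractors, and so in the final goal of one of the next two loops. *)

From mathcomp Require Import all_boot.

Set Implicit Arguments.
Unset Strict Implicit.
Unset Printing Implicit Defensive.

Lemma connect_exit (T : finType) (e : rel T) (A : {set T}) x y :
  connect e x y -> x \notin A -> y \in A ->
  exists x', exists2 y', [/\ x' \notin A & y' \in A] & e x' y'.
Proof.
case/connectP=> p + ->{y}; elim: p x => [|z p IHp] x /=; first by move=> _ /negbTE->.
case/andP=> exz pz xA; case: (boolP (z \in A)) => [zA _ | zA]; first by exists x, z.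
exact: IHp.
Qed.

Lemma lfp_closed (T : finType) (F : {set T} -> {set T}) :
  {homo F : X Y / X \subset Y} -> F (lfp F) \subset lfp F.
Proof.
move=> Fmono; rewrite {2}/lfp; apply/bigcapsP=> X FX.
by apply/(subset_trans _ FX)/Fmono/bigcap_inf.
Qed.

Lemma card_compl_proper (T : finType) (A B : {set T}) :
  A \proper B -> #|~: B| < #|~: A|.
Proof. by rewrite -properC => /proper_card. Qed.

Section Game.
Variables (V : finType) (V0 : {set V}) (E : rel V).

Local Notation CPre := (CPre V0 E).
Local Notation Attr := (Attr V0 E).
Local Notation UA := (UnconditionalAssumption V0 E).
Local Notation loop_run := (loop_run V0 E).
Local Notation GameStack_terminates := (GameStack_terminates V0 E).

Lemma CPreS j (X Y : {set V}) : X \subset Y -> CPre j X \subset CPre j Y.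
Proof.
move=> /subsetP XY; apply/subsetP=> v; rewrite !inE.
case/orP=> /andP[vj H]; rewrite vj /=; apply/orP; [left | right].
  by case/existsP: H => u /andP[evu /XY uY]; apply/existsP; exists u; rewrite evu.
by apply/forallP=> u; apply/implyP=> /(implyP (forallP H u)) /XY.
Qed.

Lemma CPre_edge j (X : {set V}) v u :
  E v u -> u \in X -> (v \in CPre j X) || (v \in CPre (~~ j) X).
Proof.
move=> evu uX; have exu : [exists w, E v w && (w \in X)].
  by apply/existsP; exists u; rewrite evu.
rewrite !inE exu !andbT /Vpl.
by case: j; rewrite /= ?inE; case: (_ \in V0); rewrite /= ?orbT.
Qed.

Lemma subset_Attr j (S : {set V}) : S \subset Attr j S.
Proof.
apply: subset_trans (lfp_closed _); first exact: subsetUl.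
by move=> X Y XY; apply: setUS; apply: CPreS.
Qed.

Lemma CPre_Attr j (S : {set V}) : CPre j S \subset Attr j S.
Proof.
apply: subset_trans (CPreS j (subset_Attr j S)) _.
apply: subset_trans (lfp_closed _); first exact: subsetUr.
by move=> X Y XY; apply: setUS; apply: CPreS.
Qed.

Lemma UA_trap_notin_attr j (g : {set V}) x :
  x \in (UA j g).2 -> x \notin (UA j g).1.
Proof. by rewrite /= !inE => /andP[/andP[]]. Qed.

Lemma proper_UA_step j (g : {set V}) :
  (UA j g).2 != set0 -> g \proper (UA j g).1 :|: (UA j g).2.
Proof.
case/set0Pn=> x xr; apply/properP; split.
  exact: subset_trans (subset_Attr j g) (subsetUl _ _).
exists x; first by rewrite inE xr orbT.
by apply: contra (UA_trap_notin_attr xr); apply: (subsetP (subset_Attr j g)).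
Qed.

Lemma loop_run_total j (goal trap : {set V}) :
  exists2 goal', loop_run j goal trap goal' &
    goal \subset goal' /\ (trap != set0 -> Attr j goal \subset goal').
Proof.
(* The extra summand pays for the last pass, where trap becomes empty but goal may not grow. *)
have [n] := ubnP (#|~: goal| + (trap != set0)).
elim: n goal trap => // n IHn goal trap.
have [-> _ | trap0 lt_n] := eqVneq trap set0; first by exists goal; [exact: loop_stop |].
set A := (UA j goal).1; set r := (UA j goal).2.
have [|goal' run [sub_goal' _]] := IHn (A :|: r) r.
  rewrite ltnS addn1 in lt_n; apply: leq_trans lt_n.
  have [r0 | /proper_UA_step/card_compl_proper] := eqVneq r set0.
    rewrite r0 setU0 addn0 ltnS; apply: subset_leq_card.
    by rewrite setCS; apply: subset_Attr.
  by rewrite -/A -/r addn1.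
have A_goal' : Attr j goal \subset goal' := subset_trans (subsetUl A r) sub_goal'.
have goal_goal' := subset_trans (subset_Attr j goal) A_goal'.
by exists goal'; [exact: loop_step | split].
Qed.

Lemma GameStack_terminates_loop j (G U g : {set V}) :
  loop_run j G setT g -> GameStack_terminates (~~ j) g (U :\: g) ->
  GameStack_terminates j G U.
Proof.
move=> run term; have [U0 | U0] := eqVneq (U :\: g) set0.
  exact: gs_return run U0.
exact: gs_recurse run U0 term.
Qed.

Definition reachable_from_all (G : {set V}) :=
  forall v, exists2 u, u \in G & connect E v u.

Lemma reachable_from_allS (G H : {set V}) :
  G \subset H -> reachable_from_all G -> reachable_from_all H.
Proof. by move=> /subsetP GH reachG v; have [u /GH] := reachG v; exists u. Qed.

Lemma proper_Attr_either j (G : {set V}) x :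
  reachable_from_all G -> x \notin G ->
  (G \proper Attr j G) || (G \proper Attr (~~ j) G).
Proof.
move=> reachG xG; have [u uG xu] := reachG x.
have [v [y [vG yG] evy]] := connect_exit xu xG uG.
have proper_Attr k : v \in CPre k G -> G \proper Attr k G.
  move=> vC; apply/properP; split; first exact: subset_Attr.
  by exists v => //; apply: (subsetP (CPre_Attr k G)).
by case/orP: (CPre_edge j evy yG) => /proper_Attr ->; rewrite ?orbT.
Qed.

Lemma GameStack_terminates_compl j (G : {set V}) :
  reachable_from_all G -> GameStack_terminates j G (~: G).
Proof.
have [n] := ubnP #|~: G|; elim: n j G => // n IHn j G lt_n reachG.
have [g run [Gg Attr_g]] := loop_run_total j G setT.
have [GT | /set0Pn[x]] := eqVneq (~: G) set0.
  by apply: gs_return run _; rewrite GT set0D.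
rewrite inE => xG; have T0 : [set: V] != set0 by apply/set0Pn; exists x.
have IHg k (h : {set V}) : G \proper h -> loop_run k G setT h ->
    GameStack_terminates k G (~: G).
  move=> Gh runh; apply: GameStack_terminates_loop runh _.
  have -> : ~: G :\: h = ~: h by rewrite setDE -setCU (setUidPr (proper_sub Gh)).
  apply: IHn; first exact: leq_trans (card_compl_proper Gh) _.
  exact: reachable_from_allS (proper_sub Gh) reachG.
have [/IHg/(_ run) // | not_proper] := boolP (G \proper g).
have gG : g = G by apply/eqP; rewrite eq_sym eqEproper Gg not_proper.
have [g2 run2 [_ Attr_g2]] := loop_run_total (~~ j) G setT.
apply: GameStack_terminates_loop run _; rewrite gG setDE setIid.
apply: IHg run2; case/orP: (proper_Attr_either j reachG xG) => [G_Attr | G_Attr].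
  by move: not_proper; rewrite (proper_sub_trans G_Attr (Attr_g T0)).
exact: proper_sub_trans G_Attr (Attr_g2 T0).
Qed.

End Game.

Theorem mainTheorem4 (V : finType) (V0 : {set V}) (E : rel V) (G : {set V})
  (hsucc : forall v : V, exists u : V, E v u)
  (hreach : forall v : V, exists2 u : V, u \in G & connect E v u)
  (j0 : bool) :
  GameStack_terminates V0 E j0 G setT.
Proof.
have [g run [Gg _]] := loop_run_total V0 E j0 G setT.
apply: GameStack_terminates_loop run _; rewrite setTD.
exact/GameStack_terminates_compl/(reachable_from_allS Gg).
Qed.
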